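(* Let $d\ge 2$ and $c_1\in(0,1]$. There exist constants $C>1$, $c\in(0,1)$ and $0<c'\le C'$, depending only on $d$ and $c_1$, such that the following holds for every finite field $\mathbb F_q$ of characteristic greater than two. Let $E,F\subset\mathbb F_q^d$ and $0\le\alpha\le1$. Assume that the number of distinct lines $l_x$ with $x\in E\setminus\{0\}$ is at least $c_1 q^{-\alpha}|E|$. If $|E||F|\ge Cq^{d+\alpha}$, then there exists a set $E_0\subset E$ with $c' q^{-\alpha}|E|\le|E_0|\le C' q^{-\alpha}|E|$ such that $|\Pi(E_0,F)|\ge c\,q$.
   Context: $\mathbb F_q$ is a finite field with $q$ elements and characteristic greater than two; $\mathbb F_q^*=\mathbb F_q\setminus\{0\}$. For $x\in\mathbb F_q^d\setminus\{0\}$, $l_x=\{sx: s\in\mathbb F_q^*\}$ (the line through the origin and $x$, with the origin removed). For $E,F\subset\mathbb F_q^d$, $\Pi(E,F)=\{x\cdot y: x\in E,\ y\in F\}$ with $x\cdot y=\sum_i x_iy_i$. *)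

From mathcomp Require Import all_boot all_algebra all_field.
From Stdlib Require Import Reals.
Set Implicit Arguments. Unset Strict Implicit. Unset Printing Implicit Defensive.
Import GRing.Theory.
Local Open Scope ring_scope.

Definition dotv (K : finFieldType) (d : nat) (x y : 'rV[K]_d) : K :=
  \sum_(i < d) x 0 i * y 0 i.

Definition line (K : finFieldType) (d : nat) (x : 'rV[K]_d) : {set 'rV[K]_d} :=
  [set s *: x | s in [set s : K | s != 0]].

Definition nlines (K : finFieldType) (d : nat) (E : {set 'rV[K]_d}) : nat :=
  #|[set line x | x in E :\ 0]|.

Definition Pi (K : finFieldType) (d : nat) (E F : {set 'rV[K]_d}) : {set K} :=
  [set dotv x y | x in E, y in F].

Definition char_gt2 (K : finFieldType) : Prop :=
  forall p : nat, p \in [pchar K] -> leq 3 p.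

(* Keep in E one point on each of k ~ c1 q^-alpha |E| distinct lines and call
   this set A, so that q^d <= |A||F|.  With nu(t) = #{(x,y) in A x F : x.y = t}
   we have sum nu = |A||F| = N, and Cauchy-Schwarz gives N^2 <= |Pi(A,F)| sum nu^2.
   The variance of nu is at most |A| times the sum over x in A of the excess
   q #{(y,y') in F^2 : x.y = x.y'} - |F|^2.  The excess is invariant under
   scaling x, and its sum over all w in F_q^d is at most q^(d+1) |F|, because for
   y <> y' the condition w.(y - y') = 0 cuts out a hyperplane.  Since the q - 1
   nonzero multiples of the points of A are pairwise distinct, the excess summed
   over A is at most q^(d+1) |F| / (q - 1).  Hence q sum nu^2 <= (2q-1)/(q-1) N^2
   and |Pi(A,F)| >= q/2. *)

From Stdlib Require Import Reals Lra ZArith.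
From mathcomp Require Import all_boot all_order all_algebra zify.
From mathcomp Require ring.
Set Implicit Arguments. Unset Strict Implicit. Unset Printing Implicit Defensive.

Section SumsOfSquares.
Import ring GRing.Theory Num.Theory.
Local Open Scope ring_scope.

Lemma sqr_sum_le_card_sum_sqr (R : realDomainType) (I : finType) (A : {pred I})
    (a : I -> R) :
  (\sum_(i in A) a i) ^+ 2 <= #|A|%:R * \sum_(i in A) a i ^+ 2.
Proof.
set S := \sum_(i in A) a i; set Q := \sum_(i in A) a i ^+ 2.
have row_sum i : \sum_(j in A) (a i - a j) ^+ 2 =
    #|A|%:R * a i ^+ 2 - (a i * S) *+ 2 + Q.
  under eq_bigr do rewrite sqrrB.
  by rewrite big_split /= sumrB sumr_const sumrMnl -mulr_sumr mulr_natl.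
have double_sum : \sum_(i in A) \sum_(j in A) (a i - a j) ^+ 2 =
    (#|A|%:R * Q - S ^+ 2) *+ 2.
  under eq_bigr do rewrite row_sum.
  rewrite big_split sumrB /= sumr_const sumrMnl -mulr_sumr -mulr_suml -expr2.
  by rewrite -/S -/Q -[Q *+ _]mulr_natl !mulr2n; ring.
have : 0 <= \sum_(i in A) \sum_(j in A) (a i - a j) ^+ 2.
  by apply: sumr_ge0 => i _; apply: sumr_ge0 => j _; apply: sqr_ge0.
by rewrite double_sum pmulrn_lge0 // subr_ge0.
Qed.

Lemma sum_sqr_centered (R : comNzRingType) (I : finType) (a : I -> R) :
  let S := \sum_i a i in
  \sum_i (#|I|%:R * a i - S) ^+ 2 = #|I|%:R * (#|I|%:R * \sum_i a i ^+ 2 - S ^+ 2).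
Proof.
move=> S; have -> : \sum_i (#|I|%:R * a i - S) ^+ 2 =
    \sum_i #|I|%:R ^+ 2 * a i ^+ 2 - \sum_i (#|I|%:R * S *+ 2) * a i
    + \sum_(i : I) S ^+ 2.
  by rewrite -sumrB -big_split /=; apply: eq_bigr => i _; ring.
by rewrite -!mulr_sumr sumr_const -/S -mulr_natl; ring.
Qed.

End SumsOfSquares.

Lemma leq_double_of_moments (q N P V Y : nat) :
  1 < q -> 0 < N -> N ^ 2 <= P * V -> q * V <= N ^ 2 + Y -> q.-1 * Y <= q * N ^ 2 ->
  q <= 2 * P.
Proof.
move=> q_gt1 N_gt0 sqr_N_le sum_le excess_le.
have : q.-1 * q * N ^ 2 <= P * (q.-1 + q) * N ^ 2.
  have := leq_mul (leqnn (q.-1 * q)) sqr_N_le.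
  have := leq_mul (leqnn (q.-1)) sum_le.
  nia.
by rewrite leq_pmul2r ?expn_gt0 ?N_gt0 //; nia.
Qed.

Section DotProductSets.
Import ring Order.TTheory GRing.Theory Num.Theory.
Local Open Scope ring_scope.

Variables (K : finFieldType) (d : nat).
Implicit Types (x y z w : 'rV[K]_d) (A F : {set 'rV[K]_d}).

Lemma card_rV : #|{: 'rV[K]_d}| = (#|K| ^ d)%N.
Proof. by rewrite card_mx mul1n. Qed.

Lemma dotvC x y : dotv x y = dotv y x.
Proof. by apply: eq_bigr => i _; rewrite mulrC. Qed.

Lemma dotvDl x y z : dotv (x + y) z = dotv x z + dotv y z.
Proof. by rewrite /dotv -big_split; apply: eq_bigr => i _; rewrite mxE mulrDl. Qed.

Lemma dotvZl (s : K) x z : dotv (s *: x) z = s * dotv x z.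
Proof. by rewrite /dotv mulr_sumr; apply: eq_bigr => i _; rewrite mxE mulrA. Qed.

Lemma dotvBl x y z : dotv (x - y) z = dotv x z - dotv y z.
Proof. by rewrite dotvDl -scaleN1r dotvZl mulN1r. Qed.

Lemma dotv_delta_mx (i : 'I_d) z : dotv (delta_mx 0 i) z = z 0 i.
Proof.
rewrite /dotv (bigD1 i) //= big1 ?addr0 => [|j ji]; rewrite mxE.
  by rewrite !eqxx mul1r.
by rewrite (negbTE ji) andbF mul0r.
Qed.

Lemma card_dotv_kernel z : z != 0 ->
  (#|[set w | dotv w z == 0%R]| * #|K| <= #|K| ^ d)%N.
Proof.
move=> nz_z; have [i nz_zi] : exists i, z 0 i != 0.
  apply/existsP; apply: contraR nz_z; rewrite negb_exists => /forallP z0.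
  by apply/eqP/rowP => j; rewrite mxE; apply/eqP/negbNE.
set H := [set w | _].
pose shift (p : 'rV[K]_d * K) := p.1 + (p.2 / z 0 i) *: delta_mx 0 i.
have shift_inj : {in setX H setT &, injective shift}.
  move=> [w t] [w' t']; rewrite !inE !andbT /= => /eqP w_ker /eqP w'_ker eq_shift.
  have : dotv (shift (w, t)) z = dotv (shift (w', t')) z by rewrite eq_shift.
  rewrite !dotvDl !dotvZl !dotv_delta_mx w_ker w'_ker !add0r !divfK // => /= eq_t.
  by subst t'; move: eq_shift; rewrite /shift /= => /addIr ->.
rewrite -card_rV -[#|K|]cardsT -cardsX -(card_in_imset shift_inj).
exact: max_card.
Qed.

Definition fibre_size F w (t : K) : nat := \sum_(y in F) (dotv w y == t).

Definition collisions F w : nat :=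
  \sum_(y in F) \sum_(y' in F) (dotv w y == dotv w y').

(* The subtraction never truncates, by [sqr_card_le_collisions]. *)
Definition excess F w : nat := #|K| * collisions F w - #|F| ^ 2.

Lemma sum_fibre_size F w : (\sum_t fibre_size F w t)%N = #|F|.
Proof.
rewrite exchange_big /= -sum1_card; apply: eq_bigr => y _.
rewrite (bigD1 (dotv w y)) //= eqxx big1 // => t /negbTE.
by rewrite eq_sym => ->.
Qed.

Lemma sum_sqr_fibre_size F w : (\sum_t fibre_size F w t ^ 2)%N = collisions F w.
Proof.
under eq_bigr do rewrite -mulnn big_distrlr /=.
rewrite exchange_big; apply: eq_bigr => y _.
rewrite exchange_big; apply: eq_bigr => y' _ /=.
rewrite (bigD1 (dotv w y)) //= eqxx big1 ?addn0 => [|t /negbTE ne_t].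
  by rewrite mul1n eq_sym.
by rewrite eq_sym ne_t.
Qed.

Lemma collisionsZ F (s : K) x : s != 0 -> collisions F (s *: x) = collisions F x.
Proof.
move=> nz_s; apply: eq_bigr => y _; apply: eq_bigr => y' _.
by rewrite !dotvZl (inj_eq (mulfI nz_s)).
Qed.

Lemma sqr_card_le_collisions F w : (#|F| ^ 2 <= #|K| * collisions F w)%N.
Proof.
have := sqr_sum_le_card_sum_sqr predT (fun t : K => (fibre_size F w t)%:R : int).
rewrite -natr_sum sum_fibre_size; under eq_bigr do rewrite -natrX.
by rewrite -natr_sum sum_sqr_fibre_size -!natrX -natrM ler_nat.
Qed.

Lemma sum_collisions_le F :
  (#|K| * \sum_w collisions F w <= #|K| ^ d.+1 * #|F| + #|K| ^ d * #|F| ^ 2)%N.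
Proof.
have diagonal y : (#|K| * \sum_w (dotv w y == dotv w y) = #|K| ^ d.+1)%N.
  by under eq_bigr do rewrite eqxx; rewrite sum1_card card_rV expnS.
have off_diagonal y y' : y != y' ->
    (#|K| * \sum_w (dotv w y == dotv w y') <= #|K| ^ d)%N.
  move=> ne_yy'.
  have -> : (\sum_w (dotv w y == dotv w y') = #|[set w | dotv w (y - y')%R == 0%R]|)%N.
    rewrite -sum1dep_card [RHS]big_mkcond /=; apply: eq_bigr => w _.
    by rewrite [dotv w (_ - _)]dotvC dotvBl subr_eq0 ![dotv _ w]dotvC; case: eqP.
  by rewrite mulnC card_dotv_kernel // subr_eq0.
rewrite /collisions exchange_big /=; under eq_bigr do rewrite exchange_big /=.
rewrite big_distrr /=.
apply: (@leq_trans (\sum_(y in F) (#|K| ^ d.+1 + #|F| * #|K| ^ d))); last first.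
  by rewrite sum_nat_const [(#|K| ^ d.+1)%N]expnS; apply/eq_leq; ring.
apply: leq_sum => y yF; rewrite big_distrr /= (bigD1 y) //= diagonal leq_add2l.
apply: (@leq_trans (\sum_(y' in F | y' != y) #|K| ^ d)).
  by apply: leq_sum => y' /andP[_ ne_y'y]; rewrite off_diagonal // eq_sym.
rewrite big_mkcondr /= -sum_nat_const; apply: leq_sum => y' _.
by case: (y' != y).
Qed.

Lemma sum_excess_le F : (\sum_w excess F w <= #|K| ^ d.+1 * #|F|)%N.
Proof.
rewrite -(leq_add2r (#|K| ^ d * #|F| ^ 2)); apply: leq_trans (sum_collisions_le F).
have -> : (#|K| ^ d * #|F| ^ 2 = \sum_(w : 'rV[K]_d) #|F| ^ 2)%N.
  by rewrite sum_nat_const card_rV.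
rewrite -big_split big_distrr /=; apply/eq_leq/eq_bigr => w _.
by rewrite subnK // sqr_card_le_collisions.
Qed.

Lemma lineZ (s : K) x : s != 0 -> line (s *: x) = line x.
Proof.
move=> nz_s; apply/setP => u; apply/imsetP/imsetP => -[r]; rewrite inE => nz_r ->.
  by exists (r * s); [rewrite inE mulf_neq0 | rewrite scalerA].
by exists (r / s); [rewrite inE mulf_neq0 ?invr_eq0 | rewrite scalerA divfK].
Qed.

Lemma excessZ F (s : K) x : s != 0 -> excess F (s *: x) = excess F x.
Proof. by move=> nz_s; rewrite /excess collisionsZ. Qed.

Lemma sum_excess_transversal_le A F :
    0 \notin A -> {in A &, injective (@line K d)} ->
  (#|K|.-1 * \sum_(x in A) excess F x <= #|K| ^ d.+1 * #|F|)%N.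
Proof.
move=> A0 inj_line; apply: leq_trans (sum_excess_le F).
set S := [set p : 'rV[K]_d * K | (p.1 \in A) && (p.2 != 0)].
have scale_inj : {in S &, injective (fun p => p.2 *: p.1)}.
  move=> [x s] [x' s']; rewrite !inE /= => /andP[xA nz_s] /andP[x'A nz_s'] eq_sx.
  have eq_x : x = x' by apply: inj_line; rewrite // -(lineZ x nz_s) eq_sx lineZ.
  subst x'; congr pair; apply/eqP; rewrite -subr_eq0.
  have : (s - s') *: x == 0 by rewrite scalerBl eq_sx subrr.
  by rewrite scaler_eq0 => /orP[// | /eqP x0]; move: A0; rewrite -x0 xA.
have -> : (#|K|.-1 * \sum_(x in A) excess F x =
           \sum_(w in [set p.2 *: p.1 | p in S]) excess F w)%N.
  rewrite big_imset //= (eq_bigl (fun p => (p.1 \in A) && (p.2 != 0))); last first.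
    by move=> p; rewrite inE.
  rewrite -(pair_big_dep (fun x => x \in A) (fun _ s => s != 0)
                         (fun x s => excess F (s *: x))) /= big_distrr /=.
  apply: eq_bigr => x _; under [RHS]eq_bigr => s nz_s do rewrite excessZ //.
  rewrite sum_nat_const -(cardC1 (0 : K)); congr (_ * _)%N.
by rewrite [X in (_ <= X)%N](bigID (mem [set p.2 *: p.1 | p in S])) leq_addr.
Qed.

Definition dot_count A F (t : K) : nat := \sum_(x in A) fibre_size F x t.

Lemma sum_dot_count A F : (\sum_t dot_count A F t)%N = (#|A| * #|F|)%N.
Proof.
rewrite exchange_big /=; under eq_bigr do rewrite sum_fibre_size.
exact: sum_nat_const.
Qed.

Lemma dot_count_eq0 A F t : t \notin Pi A F -> dot_count A F t = 0%N.
Proof.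
move=> t_notin; rewrite /dot_count big1 // => x xA; rewrite /fibre_size big1 // => y yF.
by apply/eqP; rewrite eqb0; apply: contra t_notin => /eqP <-; apply: imset2_f.
Qed.

Lemma sqr_card_le_card_Pi A F :
  ((#|A| * #|F|) ^ 2 <= #|Pi A F| * \sum_t dot_count A F t ^ 2)%N.
Proof.
have sum_Pi : (\sum_(t in Pi A F) dot_count A F t)%N = (#|A| * #|F|)%N.
  rewrite -sum_dot_count [RHS](bigID (mem (Pi A F))) /=.
  by rewrite [X in _ = (_ + X)%N]big1 ?addn0 // => t; apply: dot_count_eq0.
have := sqr_sum_le_card_sum_sqr (Pi A F) (fun t => (dot_count A F t)%:R : int).
rewrite -natr_sum sum_Pi (eq_bigr (fun t => (dot_count A F t ^ 2)%N%:R)); last first.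
  by move=> t _; rewrite natrX.
rewrite -natr_sum -!natrX -natrM ler_nat => /leq_trans; apply.
by rewrite leq_mul2l [X in (_ <= X)%N](bigID (mem (Pi A F))) leq_addr orbT.
Qed.

Lemma sum_sqr_dot_count_le A F :
  (#|K| * \sum_t dot_count A F t ^ 2
     <= (#|A| * #|F|) ^ 2 + #|A| * \sum_(x in A) excess F x)%N.
Proof.
set q := #|K|; set n := #|A|; set m := #|F|.
pose g x t : int := q%:R * (fibre_size F x t)%:R - m%:R.
have centered_count t :
    q%:R * (dot_count A F t)%:R - (n * m)%:R = \sum_(x in A) g x t.
  by rewrite /g sumrB -mulr_sumr natr_sum sumr_const natrM [n%:R * _]mulr_natl.
have sum_sqr_g x : \sum_t g x t ^+ 2 = q%:R * (excess F x)%:R.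
  have := sum_sqr_centered (fun t : K => (fibre_size F x t)%:R : int).
  rewrite /= -natr_sum sum_fibre_size => ->.
  rewrite /excess natrB ?sqr_card_le_collisions // natrM natrX.
  by rewrite -sum_sqr_fibre_size natr_sum; under [in RHS]eq_bigr do rewrite natrX.
have : q%:R * (q%:R * (\sum_t dot_count A F t ^ 2)%:R - (n * m)%:R ^+ 2)
         <= q%:R * (n%:R * (\sum_(x in A) excess F x)%:R) :> int.
  rewrite natr_sum; under eq_bigr do rewrite natrX.
  have := sum_sqr_centered (fun t : K => (dot_count A F t)%:R : int).
  rewrite /= -natr_sum sum_dot_count => <-.
  under eq_bigr do rewrite centered_count.
  apply: (@le_trans _ _ (\sum_t n%:R * \sum_(x in A) g x t ^+ 2)).
    by apply: ler_sum => t _; apply: sqr_sum_le_card_sum_sqr.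
  rewrite -mulr_sumr exchange_big /=; under eq_bigr do rewrite sum_sqr_g.
  by rewrite -mulr_sumr natr_sum mulrCA lexx.
rewrite ler_pM2l ?ltr0n ?(ltnW (card_finNzRing_gt1 K)) // lerBlDl.
by rewrite -(natrX _ _ 2) -!natrM -natrD ler_nat.
Qed.

Lemma card_Pi_ge A F :
    0 \notin A -> {in A &, injective (@line K d)} -> (#|K| ^ d <= #|A| * #|F|)%N ->
  (#|K| <= 2 * #|Pi A F|)%N.
Proof.
move=> A0 inj_line large.
have q_gt1 := card_finNzRing_gt1 K.
apply: (leq_double_of_moments q_gt1 _ (sqr_card_le_card_Pi A F)
                              (sum_sqr_dot_count_le A F)).
  by apply: leq_trans large; rewrite expn_gt0 ltnW.
have := leq_mul (leqnn #|A|) (sum_excess_transversal_le F A0 inj_line).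
rewrite mulnCA => /leq_trans; apply.
apply: (@leq_trans (#|K| * (#|A| * #|F|) * #|K| ^ d)).
  by rewrite expnS; apply/eq_leq; ring.
by rewrite -mulnn [X in (_ <= X)%N]mulnA leq_mul2l large orbT.
Qed.

Lemma exists_line_transversal E (k : nat) : (k <= nlines E)%N ->
  exists2 E0 : {set 'rV[K]_d}, E0 \subset E /\ #|E0| = k &
    0 \notin E0 /\ {in E0 &, injective (@line K d)}.
Proof.
move=> k_le; set L := [set line x | x in E :\ 0].
pose T := [set l in take k (enum L)].
have card_T : #|T| = k.
  rewrite cardsE (card_uniqP (take_uniq _ (enum_uniq (mem L)))).
  by rewrite size_takel // -cardE.
have sub_TL : {subset T <= L} by move=> l; rewrite inE => /mem_take; rewrite mem_enum.
pose rep l := odflt 0 [pick x in E :\ 0 | line x == l].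
have repP l : l \in L -> rep l \in E :\ 0 /\ line (rep l) = l.
  case/imsetP=> x0 x0E ->; rewrite /rep; case: pickP => [x /andP[xE /eqP <-] // | none].
  by move: (none x0); rewrite x0E eqxx.
have rep_inj : {in T &, injective rep}.
  move=> l l' /sub_TL/repP[_ rep_l] /sub_TL/repP[_ rep_l'] eq_rep.
  by rewrite -rep_l -rep_l' eq_rep.
exists [set rep l | l in T]; split.
- by apply/subsetP=> _ /imsetP[l /sub_TL/repP[/setD1P[_ ?] _] ->].
- by rewrite card_in_imset.
- by apply/imsetP=> -[l /sub_TL/repP[/setD1P[nz _] _] /esym/eqP]; rewrite (negbTE nz).
- move=> _ _ /imsetP[l lT ->] /imsetP[l' l'T ->].
  by rewrite (repP l (sub_TL l lT)).2 (repP l' (sub_TL l' l'T)).2 => ->.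
Qed.

Lemma exists_subset_card_Pi_ge E F (k : nat) :
    (k <= nlines E)%N -> (#|K| ^ d <= k * #|F|)%N ->
  exists2 E0 : {set 'rV[K]_d}, E0 \subset E /\ #|E0| = k & (#|K| <= 2 * #|Pi E0 F|)%N.
Proof.
move=> k_le large.
have [E0 [sub_E0 card_E0] [E00 inj_line]] := exists_line_transversal k_le.
by exists E0 => //; apply: card_Pi_ge; rewrite // card_E0.
Qed.

Lemma max_card_rV F : (#|F| <= #|K| ^ d)%N.
Proof. by rewrite -card_rV max_card. Qed.

End DotProductSets.

Local Open Scope R_scope.

Lemma INR_expn (m n : nat) : INR (m ^ n) = INR m ^ n.
Proof. by elim: n => [|n IH] //=; rewrite expnS -multE mult_INR IH. Qed.

Lemma Rpower_INR_plus_opp (q a : R) (d : nat) :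
  0 < q -> Rpower q (INR d + a) * Rpower q (- a) = q ^ d.
Proof.
move=> q_gt0; rewrite -Rpower_plus -Rpower_pow //; congr Rpower; ring.
Qed.

Lemma exists_nat_between_half (a : R) : 2 <= a -> exists k : nat, a / 2 <= INR k <= a.
Proof.
move=> a_ge2; have [up_gt up_le] := archimed a.
have up_ge : Z.le 1 (Z.sub (up a) 1) by apply: le_IZR; rewrite minus_IZR; lra.
exists (Z.to_nat (Z.sub (up a) 1)).
rewrite INR_IZR_INZ Z2Nat.id ?minus_IZR; [lra | lia].
Qed.

Theorem lemma4p1 (d : nat) (c1 : R) :
  leq 2 d -> 0 < c1 <= 1 ->
  exists C c c' C' : R,
    1 < C /\ 0 < c < 1 /\ 0 < c' <= C' /\
    forall (K : finFieldType), char_gt2 K ->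
    forall (E F : {set 'rV[K]_d}) (alpha : R),
      0 <= alpha <= 1 ->
      c1 * Rpower (INR #|K|) (- alpha) * INR #|E| <= INR (nlines E) ->
      C * Rpower (INR #|K|) (INR d + alpha) <= INR #|E| * INR #|F| ->
      exists E0 : {set 'rV[K]_d},
        E0 \subset E /\
        c' * Rpower (INR #|K|) (- alpha) * INR #|E| <= INR #|E0| /\
        INR #|E0| <= C' * Rpower (INR #|K|) (- alpha) * INR #|E| /\
        c * INR #|K| <= INR #|Pi E0 F|.
Proof.
move=> _ [c1_gt0 c1_le1]; exists (2 / c1), (1 / 2), (c1 / 2), c1.
have inv_c1_ge1 : 1 <= / c1 by rewrite -Rinv_1; apply: Rinv_le_contravar.
split; [rewrite /Rdiv; lra | split; [lra | split; [lra |]]].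
move=> K _ E F alpha _ many_lines large.
have q_gt0 : 0 < INR #|K| by apply/lt_0_INR/leP/ltnW/card_finNzRing_gt1.
set q := INR #|K| in q_gt0 many_lines large *; set Q := Rpower q (- alpha).
have Q_gt0 : 0 < Q by apply: exp_pos.
set a := c1 * Q * INR #|E| in many_lines *.
have two_qd_le : 2 * q ^ d <= a * INR #|F|.
  rewrite -(Rpower_INR_plus_opp alpha d q_gt0) -/Q.
  rewrite (_ : 2 * _ = c1 * Q * (2 / c1 * Rpower q (INR d + alpha))); last by field; lra.
  have c1Q_ge0 : 0 <= c1 * Q by nra.
  by have := Rmult_le_compat_l _ _ _ c1Q_ge0 large; rewrite /a; lra.
have F_le : INR #|F| <= q ^ d by rewrite -INR_expn; apply/le_INR/leP/max_card_rV.
have [k [k_ge k_le]] : exists k : nat, a / 2 <= INR k <= a.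
  apply: exists_nat_between_half; have := pow_lt _ d q_gt0.
  have : 0 <= a by apply: Rmult_le_pos; [nra | apply: pos_INR].
  nra.
have k_le_lines : (k <= nlines E)%N by apply/leP/INR_le; lra.
have large_k : (#|K| ^ d <= k * #|F|)%N.
  apply/leP/INR_le; rewrite INR_expn -multE mult_INR -/q.
  by have := pos_INR #|F|; nra.
have [E0 [sub_E0 card_E0] Pi_ge] := exists_subset_card_Pi_ge k_le_lines large_k.
have := le_INR _ _ (elimT leP Pi_ge); rewrite -multE mult_INR /= -/q -/a => Pi_ge_R.
have half_a : c1 / 2 * Q * INR #|E| = a / 2 by rewrite /a; field.
by exists E0; rewrite card_E0 half_a; do !split => //; lra.
Qed.
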